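(* Let $m$ and $n$ be positive integers, let $(K,\partial_0,\dots,\partial_{m-1})$ be a field with $m$ commuting derivations, and let $L=K(a_h^{\xi}\colon(\xi,h)\lhd(\tau,\ell))$ be a field extension of $K$ generated by elements indexed by the initial segment of $(\mathbb{N}^m\times n,\unlhd)$ below $(\tau,\ell)$, where $(\tau,\ell)\in\mathbb{N}^m\times n$ or $(\tau,\ell)=\infty$. Suppose $L$, with these generators, meets the differential condition. Then: (1) each $\partial_i$ extends to a derivation $D_i$ from $K(a_h^{\xi}\colon(\xi+\varepsilon_i,h)\lhd(\tau,\ell))$ into $L$ such that $D_ia_k^{\sigma}=a_k^{\sigma+\varepsilon_i}$ whenever $(\sigma+\varepsilon_i,k)\lhd(\tau,\ell)$; (2) if $a_k^{\sigma}$ is a separable leader and $(\sigma+\varepsilon_i,k)\lhd(\tau,\ell)$, then $a_k^{\sigma+\varepsilon_i}\in K(a_h^{\xi}\colon(\xi,h)\lhd(\sigma+\varepsilon_i,k))$; in particular $a_k^{\sigma+\varepsilon_i}$ is a separable leader; (3) consequently, every generator $a_k^{\rho}$ of $L/K$ that is above a separable leader $a_k^{\sigma}$ (i.e. $\sigma\le\rho$) is itself a separable leader.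
   Context: $n$ denotes also the set $\{0,\dots,n-1\}$. For $\sigma\in\mathbb{N}^m$ write $|\sigma|=\sum_{i<m}\sigma(i)$, and let $\le$ be the componentwise (product) order on $\mathbb{N}^m$. For $i<m$, $\varepsilon_i\in\mathbb{N}^m$ is the characteristic function of $\{i\}$; addition/subtraction on $\mathbb{N}^m$ is componentwise. The total order $\unlhd$ on $\mathbb{N}^m\times n$ is defined by $(\xi,k)\unlhd(\eta,g)$ iff $(|\xi|,k,\xi(0),\dots,\xi(m-2))$ is lexicographically $\le(|\eta|,g,\eta(0),\dots,\eta(m-2))$; $\lhd$ is its strict version, and $(\sigma,k)\lhd\infty$ for all $(\sigma,k)$. For $L=K(a_h^{\xi}\colon(\xi,h)\lhd(\tau,\ell))$: $a_k^\sigma$ is below $a_k^\rho$ (and $a_k^\rho$ above $a_k^\sigma$) if $\sigma\le\rho$. $L$ meets the differential condition if: whenever $i<m$, $(\sigma+\varepsilon_i,k)\lhd(\tau,\ell)$, and $f$ is a polynomial over $K$ in variables $(x_h^{\xi}\colon(\xi,h)\unlhd(\sigma,k))$ with $f(a_h^{\xi}\colon(\xi,h)\unlhd(\sigma,k))=0$, then $\sum_{(\eta,g)\unlhd(\sigma,k)}\frac{\partial f}{\partial x_g^{\eta}}(a)\cdot a_g^{\eta+\varepsilon_i}+f^{\partial_i}(a)=0$, where $a=(a_h^{\xi}\colon(\xi,h)\unlhd(\sigma,k))$ and $f^{\partial_i}$ is obtained from $f$ by applying $\partial_i$ to its coefficients. A generator $a_k^{\sigma}$ is a leader if it is algebraic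 over $K(a_h^{\xi}\colon(\xi,h)\lhd(\sigma,k))$, and a separable leader if it is separably algebraic over that field. *)

From HB Require Import structures.
From mathcomp Require Import all_boot all_order all_algebra all_field.
From mathcomp Require Import mpoly.
Set Implicit Arguments. Unset Strict Implicit. Unset Printing Implicit Defensive.
Import Order.TTheory GRing.Theory.
Local Open Scope ring_scope.

Definition mindex (m : nat) := {ffun 'I_m -> nat}.

Definition mabs (m : nat) (s : mindex m) : nat := (\sum_(i < m) s i)%N.

Definition meps (m : nat) (i : 'I_m) : mindex m := [ffun j => nat_of_bool (j == i)].
Definition maddeps (m : nat) (s : mindex m) (i : 'I_m) : mindex m :=
  [ffun j => (s j + meps i j)%N].

Definition mle (m : nat) (s r : mindex m) : Prop := forall j : 'I_m, (s j <= r j)%N.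

Definition idx (m n : nat) := (mindex m * 'I_n)%type.

Fixpoint lexle (s t : seq nat) : bool :=
  match s, t with
  | [::], _ => true
  | _ :: _, [::] => false
  | x :: s', y :: t' => (x < y)%N || ((x == y) && lexle s' t')
  end.

Definition idx_key (m n : nat) (p : idx m n) : seq nat :=
  [:: mabs p.1, nat_of_ord p.2 & [seq p.1 j | j <- take m.-1 (enum 'I_m)]].

Definition idx_le (m n : nat) (p q : idx m n) : bool := lexle (idx_key p) (idx_key q).
Definition idx_lt (m n : nat) (p q : idx m n) : bool := idx_le p q && ~~ idx_le q p.

(* bounds: Some (tau,l) or None = infinity; (sigma,k) lhd infinity always *)
Definition below (m n : nat) (p : idx m n) (b : option (idx m n)) : bool :=
  if b is Some q then idx_lt p q else true.

Inductive in_gen (K L : fieldType) (iota : {rmorphism K -> L}) (S : L -> Prop)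
  : L -> Prop :=
  | gen_K c : in_gen iota S (iota c)
  | gen_S x : S x -> in_gen iota S x
  | gen_add x y : in_gen iota S x -> in_gen iota S y -> in_gen iota S (x + y)
  | gen_opp x : in_gen iota S x -> in_gen iota S (- x)
  | gen_mul x y : in_gen iota S x -> in_gen iota S y -> in_gen iota S (x * y)
  | gen_inv x : in_gen iota S x -> in_gen iota S (x^-1).

Definition genf (K L : fieldType) (iota : {rmorphism K -> L}) (m n : nat)
  (a : mindex m -> 'I_n -> L) (P : idx m n -> bool) : L -> Prop :=
  in_gen iota (fun x => exists p : idx m n, P p /\ x = a p.1 p.2).

Definition is_derivation (K : fieldType) (d : K -> K) : Prop :=
  (forall x y, d (x + y) = d x + d y) /\ (forall x y, d (x * y) = d x * y + x * d y).

Definition algebraic_over (L : fieldType) (F : L -> Prop) (x : L) : Prop :=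
  exists p : {poly L}, [/\ p != 0, forall j, F p`_j & root p x].

Definition sep_algebraic_over (L : fieldType) (F : L -> Prop) (x : L) : Prop :=
  exists p : {poly L}, [/\ p != 0, forall j, F p`_j, root p x & separable_poly p].

Definition leader (K L : fieldType) (iota : {rmorphism K -> L}) (m n : nat)
  (a : mindex m -> 'I_n -> L) (s : mindex m) (k : 'I_n) : Prop :=
  algebraic_over (genf iota a (fun p => idx_lt p (s, k))) (a s k).

Definition sep_leader (K L : fieldType) (iota : {rmorphism K -> L}) (m n : nat)
  (a : mindex m -> 'I_n -> L) (s : mindex m) (k : 'I_n) : Prop :=
  sep_algebraic_over (genf iota a (fun p => idx_lt p (s, k))) (a s k).

(* A polynomial in the variables
   (x_h^xi : (xi,h) unlhd (sigma,k)) is a multivariate polynomial in N variables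
   together with an enumeration vars (without repetition) of this finite set. *)
Definition differential_condition (K L : fieldType) (iota : {rmorphism K -> L})
  (m n : nat) (d : 'I_m -> K -> K) (a : mindex m -> 'I_n -> L)
  (b : option (idx m n)) : Prop :=
  forall (i : 'I_m) (s : mindex m) (k : 'I_n),
    below (maddeps s i, k) b ->
    forall (N : nat) (vars : N.-tuple (idx m n)),
      uniq vars -> (forall q, (q \in vars) = idx_le q (s, k)) ->
      forall f : {mpoly K[N]},
        let av := fun j : 'I_N => a (tnth vars j).1 (tnth vars j).2 in
        mmap iota av f = 0 ->
        \sum_(j < N) mmap iota av (mderiv j f)
                       * a (maddeps (tnth vars j).1 i) (tnth vars j).2
        + mmap (fun c => iota (d i c)) av f = 0.

From HB Require Import structures.
From mathcomp Require Import all_boot all_order all_algebra all_field.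
From mathcomp Require Import mpoly.
From mathcomp Require Import ring.
From Stdlib Require Import ClassicalEpsilon.
Set Implicit Arguments. Unset Strict Implicit. Unset Printing Implicit Defensive.
Import GRing.Theory.
Local Open Scope ring_scope.

(* Every x in F_i = K(a_h^xi : (xi + e_i, h) below the bound) is a quotient g(a)/h(a) of
   polynomials over K in finitely many generators a_h^xi with (xi + e_i, h) below the bound.
   Differentiating formally, D (f(a)) := sum_j (df/dx_j)(a) * a_(xi_j + e_i) + f^(d_i)(a),
   and the differential condition says exactly that D (f(a)) = 0 whenever f(a) = 0.  Hence the
   quotient rule gives a value D_i x independent of the representation, and D_i is a
   derivation extending d_i with D_i a_k^sigma = a_k^(sigma + e_i).
   If a_k^sigma is a root of a separable p over the field of its predecessors, applying D_i to
   p(a_k^sigma) = 0 gives 0 = p^(D_i)(a_k^sigma) + p'(a_k^sigma) * a_k^(sigma + e_i) with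
   p'(a_k^sigma) <> 0.  As the shift by e_i preserves the order, the coefficients of
   p^(D_i) lie below (sigma + e_i, k), and so does a_k^(sigma + e_i).  Induction on
   |rho| - |sigma| then moves a separable leader up to any generator above it. *)

Lemma mpoly_ring_ind (R : nzRingType) N (P : {mpoly R[N]} -> Prop) :
  (forall c, P c%:MP) -> (forall j, P 'X_j) ->
  (forall f g, P f -> P g -> P (f + g)) -> (forall f g, P f -> P g -> P (f * g)) ->
  forall f, P f.
Proof.
move=> PC PX PD PM; elim/mpolyind => [|c mm f _ _ Pf]; first exact: (PC 0).
apply: (PD) => //; rewrite -mul_mpolyC mpolyXE_id; apply: (PM) => //.
apply: (big_ind P) => [||j _]; [exact: (PC 1) | exact: PM |].
by elim: (mm j) => [|e IHe]; [exact: (PC 1) | rewrite exprS; apply: (PM)].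
Qed.

Section DerivedEvaluation.
Variables (K L : fieldType) (iota : {rmorphism K -> L}) (dd : {additive K -> L}).
Hypothesis ddM : forall x y, dd (x * y) = dd x * iota y + iota x * dd y.

Lemma dd1 : dd 1 = 0.
Proof.
have := ddM 1 1; rewrite mulr1 rmorph1 mulr1 mul1r => /eqP.
by rewrite eq_sym -subr_eq0 addrK => /eqP.
Qed.

Lemma mmapZX N (h : 'I_N -> L) c mm :
  mmap dd h (c *: 'X_[mm]) = dd c * mmap1 h mm.
Proof.
have [->|nz] := eqVneq c 0; first by rewrite scale0r mmap0 raddf0 mul0r.
by rewrite /mmap (perm_big _ (msuppZ _ nz)) msuppX big_seq1 mcoeffZ mcoeffX eqxx mulr1.
Qed.

Section FixedArity.
Variable N : nat.
Implicit Types (f g : {mpoly K[N]}) (av bv : 'I_N -> L).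
Local Notation ev av := (mmap iota av).

(* Ring-morphism rules for [mmap iota av], stated so that rewriting leaves the evaluations in
   the syntactic form [mmap iota av f] rather than through the canonical rmorphism. *)
Lemma rmmapD av : {morph ev av : f g / f + g}. Proof. exact: rmorphD. Qed.
Lemma rmmapB av : {morph ev av : f g / f - g}. Proof. exact: rmorphB. Qed.
Lemma rmmapN av : {morph ev av : f / - f}. Proof. exact: rmorphN. Qed.
Lemma rmmapM av : {morph ev av : f g / f * g}. Proof. exact: rmorphM. Qed.
Lemma rmmap1 av : ev av 1 = 1. Proof. exact: rmorph1. Qed.

(* [dmmap av bv f] = sum_j (df/dx_j)(av) * bv_j + f^dd(av), where bv_j stands for the
   derivative of av_j; this is the left-hand side of the differential condition. *)
Definition dmmap av bv f : L := \sum_(j < N) ev av f^`M(j) * bv j + mmap dd av f.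

Lemma mmap_ddM av f g : mmap dd av (f * g) = mmap dd av f * ev av g + ev av f * mmap dd av g.
Proof.
pose k := maxn (msize f) (msize g).
have hf : (msize f <= k)%N by rewrite leq_maxl.
have hg : (msize g <= k)%N by rewrite leq_maxr.
rewrite (mpolywME hf hg) raddf_sum /= !(mmapE k hf) !(mmapE k hg).
rewrite !big_distrlr /= !pair_big /= -big_split /=; apply: eq_bigr => -[m1 m2] _ /=.
rewrite mmapZX ddM commr_mmap1_M; last by move=> *; apply: mulrC.
by ring.
Qed.

Lemma dmmapD av bv : {morph dmmap av bv : f g / f + g}.
Proof.
move=> f g; rewrite /dmmap mmapD.
under eq_bigr do rewrite mderivD rmmapD mulrDl.
by rewrite big_split /=; ring.
Qed.

Lemma dmmapM av bv f g :
  dmmap av bv (f * g) = dmmap av bv f * ev av g + ev av f * dmmap av bv g.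
Proof.
rewrite /dmmap mmap_ddM.
under eq_bigr => j _.
  rewrite mderivM rmmapD !rmmapM.
  have -> : (ev av f^`M(j) * ev av g + ev av f * ev av g^`M(j)) * bv j =
    ev av f^`M(j) * bv j * ev av g + ev av f * (ev av g^`M(j) * bv j) by ring.
  over.
by rewrite big_split /= -mulr_suml -mulr_sumr; ring.
Qed.

Lemma dmmapB av bv : {morph dmmap av bv : f g / f - g}.
Proof. by move=> f g; apply/eqP; rewrite eq_sym subr_eq -dmmapD subrK. Qed.

Lemma dmmapC av bv c : dmmap av bv c%:MP = dd c.
Proof. by rewrite /dmmap big1 ?add0r ?mmapC // => j _; rewrite mderivC mmap0 mul0r. Qed.

Lemma dmmap1 av bv : dmmap av bv 1 = 0.
Proof. by rewrite -[1]/(1%:MP) dmmapC dd1. Qed.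

Lemma dmmapX av bv j : dmmap av bv 'X_j = bv j.
Proof.
rewrite /dmmap (bigD1 j) //= big1 => [|l nl]; last first.
  by rewrite mderivX mnm1E eq_sym (negbTE nl) scale0r mmap0 mul0r.
rewrite mderivX mnm1E eqxx scale1r addr0.
have -> : (U_(j) - U_(j))%MM = 0%MM by apply/mnmP=> l; rewrite mnmBE subnn mnm0E.
by rewrite mpolyX0 rmmap1 mul1r -[X in mmap _ _ X]scale1r mmapZX dd1 mul0r addr0.
Qed.

End FixedArity.

Section Renaming.
Variables (N M : nat) (phi : 'I_N -> 'I_M).

Definition mrename (f : {mpoly K[N]}) : {mpoly K[M]} :=
  comp_mpoly [tuple 'X_(phi j) | j < N] f.

Lemma mrenameC c : mrename c%:MP = c%:MP. Proof. exact: comp_mpolyC. Qed.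
Lemma mrenameD : {morph mrename : f g / f + g}. Proof. exact: comp_mpolyD. Qed.
Lemma mrenameM : {morph mrename : f g / f * g}. Proof. exact: rmorphM. Qed.

Lemma mrenameX j : mrename 'X_j = 'X_(phi j).
Proof. by rewrite /mrename comp_mpolyXU -tnth_nth tnth_mktuple. Qed.

Variables (av : 'I_N -> L) (av' : 'I_M -> L).
Hypothesis av'_phi : forall j, av' (phi j) = av j.

Lemma mmap_mrename f : mmap iota av' (mrename f) = mmap iota av f.
Proof.
elim/mpoly_ring_ind: f => [c|j|f g Hf Hg|f g Hf Hg].
- by rewrite mrenameC !mmapC.
- by rewrite mrenameX !mmapX !mmap1U.
- by rewrite mrenameD !rmmapD Hf Hg.
- by rewrite mrenameM !rmmapM Hf Hg.
Qed.

Variables (bv : 'I_N -> L) (bv' : 'I_M -> L).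
Hypothesis bv'_phi : forall j, bv' (phi j) = bv j.

Lemma dmmap_mrename f : dmmap av' bv' (mrename f) = dmmap av bv f.
Proof.
elim/mpoly_ring_ind: f => [c|j|f g Hf Hg|f g Hf Hg].
- by rewrite mrenameC !dmmapC.
- by rewrite mrenameX !dmmapX.
- by rewrite mrenameD !dmmapD Hf Hg.
- by rewrite mrenameM !dmmapM Hf Hg !mmap_mrename.
Qed.

End Renaming.
End DerivedEvaluation.

Section IndexOrder.
Variables m n : nat.
Implicit Types (p q r : idx m n) (s t u : seq nat).

Lemma lexle_refl s : lexle s s.
Proof. by elim: s => //= x s ->; rewrite eqxx orbT. Qed.

Lemma lexle_trans : transitive lexle.
Proof.
move=> t s u; elim: s t u => [//|x s IH] [//|y t] [//|z u] /=.
case/orP=> [yx|/andP[/eqP<- ts]]; case/orP=> [xz|/andP[/eqP<- su]].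
- by rewrite (ltn_trans yx xz).
- by rewrite yx.
- by rewrite xz.
- by rewrite eqxx (IH _ _ ts su) orbT.
Qed.

Lemma lexle_total : total lexle.
Proof.
elim=> [//|x s IH] [|y t] //=.
by case: (ltngtP x y) => //= ->; rewrite IH.
Qed.

Definition addseq s t := [seq x.1 + x.2 | x <- zip s t]%N.

Lemma lexle_addseq2r c s t : size s = size c -> size t = size c ->
  lexle (addseq s c) (addseq t c) = lexle s t.
Proof.
elim: c s t => [|z c IH] [|x s] [|y t] //= [hs] [ht].
by rewrite ltn_add2r eqn_add2r IH.
Qed.

Lemma mabs_maddeps (s : mindex m) i : mabs (maddeps s i) = (mabs s).+1.
Proof.
rewrite /mabs (eq_bigr (fun j => s j + meps i j)%N) => [|j _]; last by rewrite ffunE.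
rewrite big_split /= -addn1; congr (_ + _)%N.
by rewrite (bigD1 i) //= ffunE eqxx big1 // => j nj; rewrite ffunE (negbTE nj).
Qed.

Definition eps_key (i : 'I_m) : seq nat :=
  [:: 1%N, 0%N & [seq nat_of_bool (j == i) | j <- take m.-1 (enum 'I_m)]].

Lemma idx_key_shift p i : idx_key (maddeps p.1 i, p.2) = addseq (idx_key p) (eps_key i).
Proof.
rewrite /idx_key /eps_key /= mabs_maddeps /addseq /= addn0 addn1; congr [:: _, _ & _].
by elim: (take _ _) => //= j l ->; rewrite /maddeps /meps !ffunE.
Qed.

Lemma idx_le_shift p q i :
  idx_le (maddeps p.1 i, p.2) (maddeps q.1 i, q.2) = idx_le p q.
Proof. by rewrite /idx_le !idx_key_shift lexle_addseq2r // /idx_key /eps_key /= !size_map. Qed.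

Lemma idx_lt_shift p q i :
  idx_lt (maddeps p.1 i, p.2) (maddeps q.1 i, q.2) = idx_lt p q.
Proof. by rewrite /idx_lt !idx_le_shift. Qed.

Lemma idx_le_refl p : idx_le p p. Proof. exact: lexle_refl. Qed.

Lemma idx_le_trans : transitive (@idx_le m n).
Proof. by move=> q p r; apply: lexle_trans. Qed.

Lemma idx_le_total : total (@idx_le m n).
Proof. by move=> p q; apply: lexle_total. Qed.

Lemma idx_le_lt_trans p q r : idx_le p q -> idx_lt q r -> idx_lt p r.
Proof.
move=> pq /andP[qr nrq]; rewrite /idx_lt (idx_le_trans pq qr).
by apply: contra nrq => /idx_le_trans; apply.
Qed.

Lemma idx_lt_trans p q r : idx_lt p q -> idx_lt q r -> idx_lt p r.
Proof. by case/andP=> pq _; apply: idx_le_lt_trans. Qed.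

Lemma below_le p q b : idx_le p q -> below q b -> below p b.
Proof. by case: b => //= c /idx_le_lt_trans; apply. Qed.

Lemma below_lt p q b : idx_lt p q -> below q b -> below p b.
Proof. by case/andP=> pq _; apply: below_le. Qed.

Lemma idx_lt_maddeps (s : mindex m) (k : 'I_n) i : idx_lt (s, k) (maddeps s i, k).
Proof. by rewrite /idx_lt /idx_le /idx_key /= mabs_maddeps ltnSn /= ltnNge leqnSn /= eqn_leq ltnn. Qed.

Lemma idx_le_mabs p q : idx_le p q -> (mabs p.1 <= mabs q.1)%N.
Proof. by rewrite /idx_le /idx_key /= => /orP[/ltnW|/andP[/eqP-> _]]. Qed.

Lemma mle_mabs (s r : mindex m) : mle s r -> (mabs s <= mabs r)%N.
Proof. by move=> sr; apply: leq_sum => j _; apply: sr. Qed.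

Lemma mle_mabs_eq (s r : mindex m) : mle s r -> mabs s = mabs r -> s = r.
Proof.
move=> sr e; apply/ffunP => j; apply/eqP; rewrite eqn_leq sr /=.
have /eqP : (\sum_(l < m) (r l - s l) = 0)%N.
  apply/eqP; rewrite -(eqn_add2l (mabs s)) addn0 {2}e /mabs -big_split /=.
  by apply/eqP/eq_bigr => l _; rewrite subnKC.
by rewrite sum_nat_eq0 => /forallP/(_ j); rewrite subn_eq0.
Qed.

Lemma mle_idx_le (s r : mindex m) (k : 'I_n) : mle s r -> idx_le (s, k) (r, k).
Proof.
move=> sr; case: (ltngtP (mabs s) (mabs r)) (mle_mabs sr) => [lt _|//|e _].
  by rewrite /idx_le /idx_key /= lt.
by rewrite (mle_mabs_eq sr e) idx_le_refl.
Qed.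

(* An element x below q has |x.1| <= |q.1|, so x.1 ranges over a finite type. *)
Lemma idx_le_enum q :
  exists2 vars : seq (idx m n), uniq vars & forall x, (x \in vars) = idx_le x q.
Proof.
pose B := (mabs q.1).+1.
pose emb (y : {ffun 'I_m -> 'I_B} * 'I_n) : idx m n := ([ffun j => val (y.1 j)], y.2).
exists (undup [seq x <- map emb (enum {: {ffun 'I_m -> 'I_B} * 'I_n}) | idx_le x q]).
  exact: undup_uniq.
move=> x; rewrite mem_undup mem_filter andb_idr // => xq.
have xB j : (x.1 j < B)%N.
  by rewrite ltnS (leq_trans _ (idx_le_mabs xq)) // /mabs (bigD1 j) //= leq_addr.
apply/mapP; exists ([ffun j => Ordinal (xB j)], x.2); first by rewrite mem_enum.
by rewrite /emb /=; case: x {xq} xB => s k xB; congr (_, _); apply/ffunP => j; rewrite !ffunE.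
Qed.

End IndexOrder.

Lemma separable_deriv_root_neq0 (L : fieldType) (p : {poly L}) x :
  separable_poly p -> root p x -> p^`().[x] != 0.
Proof.
move=> sp /factor_theorem[q pq]; move: sp; rewrite pq separable_root => /andP[_ nr].
by rewrite derivM derivXsubC hornerD !hornerM hornerXsubC subrr mulr0 add0r hornerC mulr1.
Qed.

Section Generated.
Variables (K L : fieldType) (iota : {rmorphism K -> L}).
Implicit Types (S : L -> Prop) (x : L).

Lemma in_gen_mono S S' x :
  (forall y, S y -> S' y) -> in_gen iota S x -> in_gen iota S' x.
Proof.
move=> SS'; elim=> [c|y /SS' Sy|y z _ Hy _ Hz|y _ Hy|y z _ Hy _ Hz|y _ Hy].
- exact: gen_K.
- exact: gen_S.
- exact: gen_add.
- exact: gen_opp.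
- exact: gen_mul.
- exact: gen_inv.
Qed.

Lemma in_gen0 S : in_gen iota S 0.
Proof. by rewrite -(rmorph0 iota); apply: gen_K. Qed.

Lemma in_gen1 S : in_gen iota S 1.
Proof. by rewrite -(rmorph1 iota); apply: gen_K. Qed.

Lemma in_gen_horner S (q : {poly L}) x :
  (forall j, in_gen iota S q`_j) -> in_gen iota S x -> in_gen iota S q.[x].
Proof.
move=> Sq Sx; rewrite horner_coef; apply: (big_ind (in_gen iota S)) => [||j _].
- exact: in_gen0.
- exact: gen_add.
apply: gen_mul => //; elim: (val j) => [|e IHe]; first exact: in_gen1.
by rewrite exprS; apply: gen_mul.
Qed.

Lemma in_gen_sep_algebraic S x : in_gen iota S x -> sep_algebraic_over (in_gen iota S) x.
Proof.
move=> Sx; exists ('X - x%:P); split.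
- by rewrite polyXsubC_eq0.
- case=> [|[|j]]; rewrite coefB coefX coefC /= ?subr0 ?sub0r.
  + exact: gen_opp.
  + exact: in_gen1.
  + exact: in_gen0.
- by rewrite root_XsubC.
- by have := separable_prod_XsubC [:: x]; rewrite big_seq1.
Qed.

Section DerivationOnGenerated.
Variables (S : L -> Prop) (D : L -> L).
Local Notation F := (in_gen iota S).
Hypothesis DD : forall x y, F x -> F y -> D (x + y) = D x + D y.
Hypothesis DM : forall x y, F x -> F y -> D (x * y) = D x * y + x * D y.

Lemma derivation0 : D 0 = 0.
Proof.
have := DD (in_gen0 S) (in_gen0 S); rewrite addr0 => /eqP.
by rewrite eq_sym -subr_eq0 addrK => /eqP.
Qed.

Lemma derivation1 : D 1 = 0.
Proof.
have := DM (in_gen1 S) (in_gen1 S); rewrite !mulr1 mul1r => /eqP.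
by rewrite eq_sym -subr_eq0 addrK => /eqP.
Qed.

Lemma derivationN x : F x -> D (- x) = - D x.
Proof.
move=> Fx; apply/eqP; rewrite -addr_eq0 -DD ?addNr ?derivation0 //; exact: gen_opp.
Qed.

Lemma derivationV x : F x -> D x^-1 = - D x / x ^+ 2.
Proof.
move=> Fx; have [->|nz] := eqVneq x 0; first by rewrite invr0 derivation0 oppr0 mul0r.
have := DM Fx (gen_inv Fx); rewrite divff // derivation1 => /esym/eqP.
rewrite addrC addr_eq0 => /eqP e.
by apply: (mulfI nz); rewrite e; field.
Qed.

Lemma derivation_horner (q : {poly L}) x : (forall j, F q`_j) -> F x ->
  D q.[x] = (map_poly D q).[x] + q^`().[x] * D x.
Proof.
move=> + Fx; elim/poly_ind: q => [|q c IHq] Fq.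
  by rewrite map_poly0 deriv0 !horner0 derivation0 mul0r addr0.
have Fq' j : F q`_j by have := Fq j.+1; rewrite coefD coefMX coefC addr0.
have Fc : F c by have := Fq 0%N; rewrite coefD coefMX coefC add0r.
have -> : map_poly D (q * 'X + c%:P) = map_poly D q * 'X + (D c)%:P.
  apply/polyP => j; rewrite coef_map_id0 ?derivation0 // !(coefD, coefMX, coefC).
  by case: j => [|j] /=; rewrite ?add0r ?addr0 // coef_map_id0 ?derivation0.
have Fqx := in_gen_horner Fq' Fx.
rewrite derivMXaddC !hornerE DD ?DM ?IHq //; [ring | exact: gen_mul].
Qed.

End DerivationOnGenerated.
End Generated.

Section DifferentialCondition.
Variables (m n : nat) (K L : fieldType) (d : 'I_m -> K -> K)
  (iota : {rmorphism K -> L}) (a : mindex m -> 'I_n -> L) (b : option (idx m n)).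
Hypothesis d_derivation : forall i, is_derivation (d i).
Hypothesis dcond : differential_condition iota d a b.

Lemma diota_is_additive i : zmod_morphism (fun c => iota (d i c)).
Proof.
have [dD _] := d_derivation i; move=> x y /=; rewrite -rmorphB; congr (iota _).
by apply: (addIr (d i y)); rewrite -dD !subrK.
Qed.

(* Convertible to the map [fun c => iota (d i c)] of [differential_condition]. *)
Definition diota i : {additive K -> L} :=
  HB.pack_for {additive K -> L} (fun c => iota (d i c))
    (GRing.isZmodMorphism.Build K L _ (diota_is_additive i)).

Lemma diotaM i x y : diota i (x * y) = diota i x * iota y + iota x * diota i y.
Proof. by have [_ dM] := d_derivation i; rewrite /= dM rmorphD !rmorphM. Qed.

Section Direction.
Variable i : 'I_m.

Definition tgen N (t : N.-tuple (idx m n)) (j : 'I_N) : L := a (tnth t j).1 (tnth t j).2.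
Definition tgen_shift N (t : N.-tuple (idx m n)) (j : 'I_N) : L :=
  a (maddeps (tnth t j).1 i) (tnth t j).2.
Definition admissible N (t : N.-tuple (idx m n)) : Prop :=
  {in t, forall p, below (maddeps p.1 i, p.2) b}.

Local Notation ev t := (mmap iota (tgen t)).
Local Notation dev t := (dmmap iota (diota i) (tgen t) (tgen_shift t)).

(* The differential condition only concerns polynomials in the variables indexed by all
   (xi, h) up to some (sigma, k): rename the variables of f into those up to the largest
   entry of t. *)
Lemma dev_eq0 N (t : N.-tuple (idx m n)) f : admissible t -> ev t f = 0 -> dev t f = 0.
Proof.
case: N t f => [|N] t f adm.
  rewrite (nvar0_mpolyC f) mmapC dmmapC => /eqP.
  by rewrite fmorph_eq0 => /eqP->; apply: raddf0.
have [j0 _ j0max] := @extremumP _ _ (fun p q => idx_le q p) ord0 xpredT (tnth t)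
  (@idx_le_refl _ _) (fun q p r pq qr => idx_le_trans qr pq) (fun p q => idx_le_total q p) isT.
set q := tnth t j0 in j0max.
have [vars uvars mem_vars] := idx_le_enum q.
have t_vars j : tnth t j \in vars by rewrite mem_vars; apply: j0max.
pose phi j := Ordinal (etrans (index_mem _ _) (t_vars j)).
have vars_phi j : tnth (in_tuple vars) (phi j) = tnth t j.
  by rewrite (tnth_nth (tnth t j)) nth_index.
have tgen_phi j : tgen (in_tuple vars) (phi j) = tgen t j by rewrite /tgen vars_phi.
have tgen_shift_phi j : tgen_shift (in_tuple vars) (phi j) = tgen_shift t j.
  by rewrite /tgen_shift vars_phi.
rewrite -(mmap_mrename _ tgen_phi) -(dmmap_mrename (diotaM i) tgen_phi tgen_shift_phi).
have mem_vars' x : (x \in in_tuple vars) = idx_le x (q.1, q.2) by rewrite -surjective_pairing.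
exact: (@dcond i q.1 q.2 (adm _ (mem_tnth j0 t)) _ (in_tuple vars) uvars mem_vars').
Qed.

Definition represents (x : L) N (t : N.-tuple (idx m n)) (g h : {mpoly K[N]}) : Prop :=
  [/\ admissible t, ev t h != 0 & x = ev t g / ev t h].

Definition quotient_deriv N (t : N.-tuple (idx m n)) (g h : {mpoly K[N]}) : L :=
  (dev t g * ev t h - ev t g * dev t h) / ev t h ^+ 2.

Section SameTuple.
Variables (N : nat) (t : N.-tuple (idx m n)).
Implicit Types (g h : {mpoly K[N]}).

Lemma quotient_derivE x g h :
  represents x t g h -> quotient_deriv t g h = (dev t g - x * dev t h) / ev t h.
Proof. by case=> _ nz ->; rewrite /quotient_deriv; field. Qed.

Lemma quotient_deriv_unique x g1 h1 g2 h2 :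
  represents x t g1 h1 -> represents x t g2 h2 ->
  quotient_deriv t g1 h1 = quotient_deriv t g2 h2.
Proof.
move=> r1 r2; rewrite (quotient_derivE r1) (quotient_derivE r2).
case: r1 r2 => adm nz1 e1 [_ nz2 e2].
have ev1 : ev t g1 = x * ev t h1 by rewrite e1 divfK.
have ev2 : ev t g2 = x * ev t h2 by rewrite e2 divfK.
have ev0 : ev t (g1 * h2 - g2 * h1) = 0 by rewrite rmmapB !rmmapM ev1 ev2; ring.
have := dev_eq0 adm ev0; rewrite dmmapB !(dmmapM (diotaM i)) ev1 ev2 => dev0.
by apply/eqP; rewrite eqr_div // -subr_eq0 -dev0; apply/eqP; ring.
Qed.

Lemma represents_add x y g1 h1 g2 h2 :
  represents x t g1 h1 -> represents y t g2 h2 ->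
  represents (x + y) t (g1 * h2 + g2 * h1) (h1 * h2) /\
  quotient_deriv t (g1 * h2 + g2 * h1) (h1 * h2) =
    quotient_deriv t g1 h1 + quotient_deriv t g2 h2.
Proof.
move=> [adm nz1 ->] [_ nz2 ->].
rewrite /represents /quotient_deriv rmmapD !rmmapM dmmapD !(dmmapM (diotaM i)).
by split; first split; rewrite // ?mulf_neq0 //; field; rewrite nz1 nz2.
Qed.

Lemma represents_mul x y g1 h1 g2 h2 :
  represents x t g1 h1 -> represents y t g2 h2 ->
  represents (x * y) t (g1 * g2) (h1 * h2) /\
  quotient_deriv t (g1 * g2) (h1 * h2) =
    quotient_deriv t g1 h1 * y + x * quotient_deriv t g2 h2.
Proof.
move=> [adm nz1 ->] [_ nz2 ->].
rewrite /represents /quotient_deriv !rmmapM !(dmmapM (diotaM i)).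
by split; first split; rewrite // ?mulf_neq0 //; field; rewrite nz1 nz2.
Qed.

Lemma represents_opp x g h : represents x t g h -> represents (- x) t (- g) h.
Proof. by case=> adm nz ->; split; rewrite // rmmapN mulNr. Qed.

Lemma represents_inv x g h :
  represents x t g h -> exists g' h', represents x^-1 t g' h'.
Proof.
case=> adm nz ->; have [z|nz'] := eqVneq (ev t g) 0.
  by exists 0, h; split; rewrite // z mul0r invr0 mmap0 mul0r.
by exists h, g; split; rewrite // invf_div.
Qed.

End SameTuple.

Lemma represents_iota c : represents (iota c) [tuple] c%:MP 1.
Proof. by split; rewrite // ?rmmap1 ?oner_eq0 // mmapC divr1. Qed.

Lemma represents_gen p :
  below (maddeps p.1 i, p.2) b -> represents (a p.1 p.2) [tuple p] 'X_ord0 1.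
Proof.
move=> pb; split; first by move=> q; rewrite mem_seq1 => /eqP->.
  by rewrite rmmap1 oner_eq0.
by rewrite rmmap1 divr1 mmapX mmap1U /tgen (tnth_nth p).
Qed.

Lemma represents_cat x y N1 N2 (t1 : N1.-tuple (idx m n)) (t2 : N2.-tuple (idx m n))
    g1 h1 g2 h2 :
  represents x t1 g1 h1 -> represents y t2 g2 h2 ->
  let t := [tuple of t1 ++ t2] in
  let ren1 := mrename (@lshift N1 N2) in let ren2 := mrename (@rshift N1 N2) in
  [/\ represents x t (ren1 g1) (ren1 h1), represents y t (ren2 g2) (ren2 h2),
      quotient_deriv t (ren1 g1) (ren1 h1) = quotient_deriv t1 g1 h1
    & quotient_deriv t (ren2 g2) (ren2 h2) = quotient_deriv t2 g2 h2].
Proof.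
move=> [adm1 nz1 ->] [adm2 nz2 ->] t ren1 ren2.
have adm : admissible t by move=> p; rewrite mem_cat => /orP[/adm1|/adm2].
have e1 j : tgen t (lshift N2 j) = tgen t1 j by rewrite /tgen tnth_lshift.
have s1 j : tgen_shift t (lshift N2 j) = tgen_shift t1 j by rewrite /tgen_shift tnth_lshift.
have e2 j : tgen t (rshift N1 j) = tgen t2 j by rewrite /tgen tnth_rshift.
have s2 j : tgen_shift t (rshift N1 j) = tgen_shift t2 j by rewrite /tgen_shift tnth_rshift.
rewrite /represents /quotient_deriv !(mmap_mrename _ e1, mmap_mrename _ e2).
by rewrite !(dmmap_mrename (diotaM i) e1 s1, dmmap_mrename (diotaM i) e2 s2).
Qed.

(* By [DextE], the common value of [quotient_deriv] over all representations of x;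
   an unspecified value when x has none. *)
Definition Dext (x : L) : L :=
  epsilon (inhabits 0) (fun v => exists N (t : N.-tuple (idx m n)) g h,
    represents x t g h /\ v = quotient_deriv t g h).

Lemma DextE x N (t : N.-tuple (idx m n)) g h :
  represents x t g h -> Dext x = quotient_deriv t g h.
Proof.
move=> rx; have /(epsilon_spec (inhabits 0)) : exists v N' (t' : N'.-tuple (idx m n)) g' h',
    represents x t' g' h' /\ v = quotient_deriv t' g' h'.
  by exists (quotient_deriv t g h), N, t, g, h.
rewrite -/(Dext x) => -[N' [t' [g' [h' [rx' ->]]]]].
have [r' r <- <-] := represents_cat rx' rx.
exact: quotient_deriv_unique r' r.
Qed.

Local Notation Fi := (genf iota a (fun p => below (maddeps p.1 i, p.2) b)).

Lemma represents_exists x : Fi x -> exists N (t : N.-tuple (idx m n)) g h, represents x t g h.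
Proof.
elim=> [c | _ [p [pb ->]] | x1 x2 _ [N1 [t1 [g1 [h1 r1]]]] _ [N2 [t2 [g2 [h2 r2]]]]
       | x1 _ [N1 [t1 [g1 [h1 r1]]]]
       | x1 x2 _ [N1 [t1 [g1 [h1 r1]]]] _ [N2 [t2 [g2 [h2 r2]]]]
       | x1 _ [N1 [t1 [g1 [h1 r1]]]]].
- by exists 0%N, [tuple], c%:MP, 1; apply: represents_iota.
- by exists 1%N, [tuple p], 'X_ord0, 1; apply: represents_gen.
- have [r1' r2' _ _] := represents_cat r1 r2.
  by have [r _] := represents_add r1' r2'; do 4 eexists; exact: r.
- by exists N1, t1, (- g1), h1; apply: represents_opp.
- have [r1' r2' _ _] := represents_cat r1 r2.
  by have [r _] := represents_mul r1' r2'; do 4 eexists; exact: r.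
- by have [g' [h' r]] := represents_inv r1; exists N1, t1, g', h'.
Qed.

Lemma Dext_iota c : Dext (iota c) = iota (d i c).
Proof.
rewrite (DextE (represents_iota c)) /quotient_deriv dmmapC (dmmap1 (diotaM i)).
by rewrite rmmap1 mmapC mulr0 mulr1 subr0 expr1n divr1.
Qed.

Lemma Dext_gen s k : below (maddeps s i, k) b -> Dext (a s k) = a (maddeps s i) k.
Proof.
move=> sb; rewrite (DextE (represents_gen (p := (s, k)) sb)) /quotient_deriv.
by rewrite (dmmapX (diotaM i)) (dmmap1 (diotaM i)) rmmap1 mulr0 mulr1 subr0 expr1n divr1.
Qed.

Lemma Dext_add x y : Fi x -> Fi y -> Dext (x + y) = Dext x + Dext y.
Proof.
move=> /represents_exists[N1 [t1 [g1 [h1 r1]]]] /represents_exists[N2 [t2 [g2 [h2 r2]]]].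
rewrite (DextE r1) (DextE r2); have [r1' r2' <- <-] := represents_cat r1 r2.
by have [r <-] := represents_add r1' r2'; apply: DextE r.
Qed.

Lemma Dext_mul x y : Fi x -> Fi y -> Dext (x * y) = Dext x * y + x * Dext y.
Proof.
move=> /represents_exists[N1 [t1 [g1 [h1 r1]]]] /represents_exists[N2 [t2 [g2 [h2 r2]]]].
rewrite (DextE r1) (DextE r2); have [r1' r2' <- <-] := represents_cat r1 r2.
by have [r <-] := represents_mul r1' r2'; apply: DextE r.
Qed.

Section Predecessors.
Variables (s : mindex m) (k : 'I_n).
Hypothesis sb : below (maddeps s i, k) b.
Local Notation G := (genf iota a (fun p => idx_lt p (s, k))).
Local Notation H := (genf iota a (fun p => idx_lt p (maddeps s i, k))).

Lemma idx_lt_shift_maddeps q :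
  idx_lt q (s, k) -> idx_lt (maddeps q.1 i, q.2) (maddeps s i, k).
Proof. by rewrite (idx_lt_shift q (s, k)). Qed.

Lemma genf_lt_Fi x : G x -> Fi x.
Proof.
apply: in_gen_mono => _ [q [qs ->]]; exists q; split=> //.
exact: below_lt (idx_lt_shift_maddeps qs) sb.
Qed.

Lemma genf_lt_maddeps x : G x -> H x.
Proof.
apply: in_gen_mono => _ [q [qs ->]]; exists q; split=> //.
exact: idx_lt_trans qs (idx_lt_maddeps s k i).
Qed.

Lemma Dext_genf_lt x : G x -> H (Dext x).
Proof.
elim=> [c | _ [q [qs ->]] | y z Gy Hy Gz Hz | y Gy Hy | y z Gy Hy Gz Hz | y Gy Hy].
- by rewrite Dext_iota; apply: gen_K.
- rewrite Dext_gen; last exact: below_lt (idx_lt_shift_maddeps qs) sb.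
  by apply: gen_S; exists (maddeps q.1 i, q.2); split=> //; apply: idx_lt_shift_maddeps.
- by rewrite Dext_add; [apply: gen_add | exact: genf_lt_Fi ..].
- by rewrite (derivationN Dext_add); [apply: gen_opp | exact: genf_lt_Fi].
- rewrite Dext_mul; [| exact: genf_lt_Fi ..].
  by apply: gen_add; apply: gen_mul => //; apply: genf_lt_maddeps.
- rewrite (derivationV Dext_add Dext_mul) ?expr2; last exact: genf_lt_Fi.
  by apply: gen_mul; [apply: gen_opp | apply/gen_inv/gen_mul; apply: genf_lt_maddeps].
Qed.

Lemma sep_leader_maddeps :
  sep_leader iota a s k -> H (a (maddeps s i) k) /\ sep_leader iota a (maddeps s i) k.
Proof.
move=> [p [_ Gp root_p sep_p]].
have H_a : H (a s k) by apply: gen_S; exists (s, k); split=> //; apply: idx_lt_maddeps.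
have Fi_a : Fi (a s k) by apply: gen_S; exists (s, k).
have p'_nz := separable_deriv_root_neq0 sep_p root_p.
have := derivation_horner Dext_add Dext_mul (fun j => genf_lt_Fi (Gp j)) Fi_a.
rewrite (rootP root_p) (derivation0 Dext_add) Dext_gen // => /esym/eqP.
rewrite addrC addr_eq0 => /eqP Da.
have H_next : H (a (maddeps s i) k).
  rewrite -[a _ k](mulKf p'_nz) Da; apply: gen_mul.
    apply/gen_inv/in_gen_horner => // j; rewrite coef_deriv -mulr_natr -(rmorph_nat iota).
    by apply: gen_mul; [apply: genf_lt_maddeps | apply: gen_K].
  apply/gen_opp/in_gen_horner => // j.
  by rewrite coef_map_id0 ?(derivation0 Dext_add) //; apply: Dext_genf_lt.
by split=> //; apply: in_gen_sep_algebraic.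
Qed.

End Predecessors.
End Direction.

Lemma sep_leader_mle s r k :
  below (r, k) b -> mle s r -> sep_leader iota a s k -> sep_leader iota a r k.
Proof.
move=> rb; move e : (mabs r - mabs s)%N => l; elim: l s e => [|l IHl] s e sr ls.
  by rewrite -(mle_mabs_eq sr) //; apply/eqP; rewrite eqn_leq mle_mabs // -subn_eq0 e.
have [j sj | r_le_s] := pickP (fun j => s j < r j)%N; last first.
  have rs : s = r by apply/ffunP => j; apply/eqP; rewrite eqn_leq sr leqNgt r_le_s.
  by move: e; rewrite rs subnn.
have sr' : mle (maddeps s j) r.
  move=> j'; rewrite /maddeps /meps !ffunE.
  by case: eqP => [->|_]; rewrite ?addn1 ?addn0 //; apply: sr.
apply: (IHl (maddeps s j)) => //; first by rewrite mabs_maddeps subnS e.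
by have [] := sep_leader_maddeps (below_le (mle_idx_le k sr') rb) ls.
Qed.

End DifferentialCondition.

Theorem lemma4p1 (m n : nat) (K L : fieldType) (d : 'I_m -> K -> K)
  (iota : {rmorphism K -> L}) (a : mindex m -> 'I_n -> L) (b : option (idx m n)) :
  (0 < m)%N -> (0 < n)%N ->
  (forall i, is_derivation (d i)) ->
  (forall i j x, d i (d j x) = d j (d i x)) ->
  (forall x : L, genf iota a (fun p => below p b) x) ->
  differential_condition iota d a b ->
  [/\
   (* (1) *)
   (forall i : 'I_m, exists D : L -> L,
      let F := genf iota a (fun p => below (maddeps p.1 i, p.2) b) in
      [/\ forall c : K, D (iota c) = iota (d i c),
          forall x y, F x -> F y -> D (x + y) = D x + D y,
          forall x y, F x -> F y -> D (x * y) = D x * y + x * D y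
        & forall (s : mindex m) (k : 'I_n), below (maddeps s i, k) b ->
            D (a s k) = a (maddeps s i) k]),
   (* (2) *)
   (forall (i : 'I_m) (s : mindex m) (k : 'I_n),
      sep_leader iota a s k -> below (maddeps s i, k) b ->
      genf iota a (fun p => idx_lt p (maddeps s i, k)) (a (maddeps s i) k)
      /\ sep_leader iota a (maddeps s i) k)
 & (* (3) *)
   (forall (s r : mindex m) (k : 'I_n),
      below (r, k) b -> mle s r -> sep_leader iota a s k ->
      sep_leader iota a r k)].
Proof.
move=> _ _ d_der _ _ dcond; split.
- move=> i; exists (Dext iota a b d_der i) => F.
  split; [exact: Dext_iota | exact: (Dext_add _ dcond) | exact: (Dext_mul _ dcond) |].
  exact: Dext_gen.
- by move=> i s k ls sb; apply: (sep_leader_maddeps _ dcond sb).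
- by move=> s r k; apply: (sep_leader_mle _ dcond).
Qed.
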